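(* For $N<N'$ let $\iota_{N,N'}:\mathcal M(N,K)\to\mathcal M(N',K)$ be the closed embedding $(B,\psi,\overline\psi)\mapsto\left(\begin{bmatrix}B&0\\0&0\end{bmatrix},\begin{bmatrix}\psi\\0\end{bmatrix},\begin{bmatrix}\overline\psi&0\end{bmatrix}\right)$. Then: (1) $\iota_{N',N''}\circ\iota_{N,N'}=\iota_{N,N''}$ for $N<N'<N''$; (2) $\iota_{N,N'}$ is Poisson; (3) $\mathfrak m_{N_1',N_2'}\circ(\iota_{N_1,N_1'}\times\iota_{N_2,N_2'})=\iota_{N_1+N_2,N_1'+N_2'}\circ\mathfrak m_{N_1,N_2}$ for $N_1\le N_1'$, $N_2\le N_2'$ (with $\iota_{N,N}=\mathrm{Id}$).
   Context: $\mathcal M(N,K)=\mathrm{Rep}(N,K)/\!/\mathrm{GL}_N$, with $\mathrm{Rep}(N,K)$ the triples $(B,\psi,\overline\psi)$, $B\in\mathrm{Mat}_{N\times N}(\mathbb C)$, $\psi\in\mathrm{Mat}_{N\times K}$, $\overline\psi\in\mathrm{Mat}_{K\times N}$, and $g\cdot(B,\psi,\overline\psi)=(gBg^{-1},g\psi,\overline\psi g^{-1})$. The Poisson structure on $\mathcal M(N,K)$ is induced from $\{\psi_{ia},\overline\psi_{bj}\}=\delta_{ab}\delta_{ij}$, $\{B_{mn},B_{pq}\}=\delta_{np}\sum_a\overline\psi_{aq}\psi_{ma}-\delta_{mq}\sum_a\overline\psi_{an}\psi_{pa}$, $\{B_{mn},\psi_{ia}\}=\{B_{mn},\overline\psi_{bj}\}=0$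 (commuting variables). $\mathfrak m_{N_1,N_2}$ sends $(B^{(1)},\psi^{(1)},\overline\psi^{(1)})\times(B^{(2)},\psi^{(2)},\overline\psi^{(2)})$ to $\left(\begin{bmatrix}B^{(1)}&\psi^{(1)}\overline\psi^{(2)}\\-\psi^{(2)}\overline\psi^{(1)}&B^{(2)}\end{bmatrix},\begin{bmatrix}\psi^{(1)}\\\psi^{(2)}\end{bmatrix},\begin{bmatrix}\overline\psi^{(1)}&\overline\psi^{(2)}\end{bmatrix}\right)$. *)

From HB Require Import structures.
From mathcomp Require Import all_boot all_algebra.
From mathcomp Require Import mpoly.
Set Implicit Arguments. Unset Strict Implicit. Unset Printing Implicit Defensive.
Import GRing.Theory.
Local Open Scope ring_scope.

(* Coordinates of Rep(N,K) = Mat_{NxN} x Mat_{NxK} x Mat_{KxN}: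
   nv N K = N*N + N*K + K*N coordinates, ordered as (B, psi, psibar),
   each matrix flattened with mxvec. *)
Definition nv (N K : nat) : nat := N * N + N * K + K * N.

Definition flat (R : Type) (N K : nat)
  (B : 'M[R]_N) (psi : 'M[R]_(N, K)) (psib : 'M[R]_(K, N)) : 'rV[R]_(nv N K) :=
  row_mx (row_mx (mxvec B) (mxvec psi)) (mxvec psib).

Definition iB (N K : nat) (i j : 'I_N) : 'I_(nv N K) :=
  lshift (K * N) (lshift (N * K) (mxvec_index i j)).
Definition iPsi (N K : nat) (i : 'I_N) (a : 'I_K) : 'I_(nv N K) :=
  lshift (K * N) (rshift (N * N) (mxvec_index i a)).
Definition iPsib (N K : nat) (b : 'I_K) (j : 'I_N) : 'I_(nv N K) :=
  rshift (N * N + N * K) (mxvec_index b j).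

Section Poly.
Variable F : numClosedFieldType.

Definition evalRep (N K : nat) (p : {mpoly F[nv N K]})
  (B : 'M[F]_N) (psi : 'M[F]_(N, K)) (psib : 'M[F]_(K, N)) : F :=
  p.@[fun k => flat B psi psib 0 k].

(* GL_N-invariant polynomials: the coordinate ring of M(N,K) = Rep(N,K)//GL_N,
   for the action g.(B,psi,psibar) = (g B g^-1, g psi, psibar g^-1). *)
Definition gl_invariant (N K : nat) (p : {mpoly F[nv N K]}) : Prop :=
  forall (g : 'M[F]_N), g \in unitmx ->
  forall (B : 'M[F]_N) (psi : 'M[F]_(N, K)) (psib : 'M[F]_(K, N)),
    evalRep p (g *m B *m invmx g) (g *m psi) (psib *m invmx g)
    = evalRep p B psi psib.

(* Coordinate functions, pulled back along a renaming of variables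
   e : 'I_(nv N K) -> 'I_n (identity for Rep(N,K) itself, lshift/rshift for
   the two factors of Rep(N1,K) x Rep(N2,K)). *)
Definition XB (n N K : nat) (e : 'I_(nv N K) -> 'I_n) : 'M[{mpoly F[n]}]_N :=
  \matrix_(i, j) 'X_(e (iB K i j)).
Definition XPsi (n N K : nat) (e : 'I_(nv N K) -> 'I_n) : 'M[{mpoly F[n]}]_(N, K) :=
  \matrix_(i, a) 'X_(e (iPsi i a)).
Definition XPsib (n N K : nat) (e : 'I_(nv N K) -> 'I_n) : 'M[{mpoly F[n]}]_(K, N) :=
  \matrix_(b, j) 'X_(e (iPsib b j)).

Definition pullback (n N K : nat)
  (B : 'M[{mpoly F[n]}]_N) (psi : 'M[{mpoly F[n]}]_(N, K))
  (psib : 'M[{mpoly F[n]}]_(K, N)) (p : {mpoly F[nv N K]}) : {mpoly F[n]} :=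
  comp_mpoly (mktuple (fun k => flat B psi psib 0 k)) p.

(* The Poisson bracket on C[Rep(N,K)]:
   {f,g} = sum_{x,y} (df/dx)(dg/dy){x,y} with
   {psi_ia, psibar_bj} = delta_ab delta_ij (and its antisymmetric counterpart),
   {B_mn, B_pq} = delta_np sum_a psibar_aq psi_ma - delta_mq sum_a psibar_an psi_pa,
   all other brackets of coordinates zero. *)
Definition pbracket (N K : nat) (f g : {mpoly F[nv N K]}) : {mpoly F[nv N K]} :=
  let psi := XPsi (@id _) in
  let psib := XPsib (@id _) in
  \sum_(i < N) \sum_(a < K)
     (f^`M(iPsi i a) * g^`M(iPsib a i) - f^`M(iPsib a i) * g^`M(iPsi i a))
  + \sum_(m < N) \sum_(n < N) \sum_(p < N) \sum_(q < N)
     f^`M(iB K m n) * g^`M(iB K p q) *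
     ((n == p)%:R * \sum_(a < K) psib a q * psi m a
      - (m == q)%:R * \sum_(a < K) psib a n * psi p a).
End Poly.

Definition pad (R : nzRingType) (m n m' n' : nat) (A : 'M[R]_(m, n)) : 'M[R]_(m', n') :=
  \matrix_(i, j)
    match @insub _ (fun k => k < m)%N 'I_m (val i), @insub _ (fun k => k < n)%N 'I_n (val j) with
    | Some i', Some j' => A i' j'
    | _, _ => 0
    end.

Definition iotaB (R : nzRingType) (N N' : nat) (B : 'M[R]_N) : 'M[R]_N' := pad N' N' B.
Definition iotaPsi (R : nzRingType) (N N' K : nat) (psi : 'M[R]_(N, K)) : 'M[R]_(N', K) :=
  pad N' K psi.
Definition iotaPsib (R : nzRingType) (N N' K : nat) (psib : 'M[R]_(K, N)) : 'M[R]_(K, N') :=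
  pad K N' psib.

Definition mB (R : nzRingType) (N1 N2 K : nat)
  (B1 : 'M[R]_N1) (psi1 : 'M[R]_(N1, K)) (psib1 : 'M[R]_(K, N1))
  (B2 : 'M[R]_N2) (psi2 : 'M[R]_(N2, K)) (psib2 : 'M[R]_(K, N2)) : 'M[R]_(N1 + N2) :=
  block_mx B1 (psi1 *m psib2) (- (psi2 *m psib1)) B2.
Definition mPsi (R : nzRingType) (N1 N2 K : nat)
  (psi1 : 'M[R]_(N1, K)) (psi2 : 'M[R]_(N2, K)) : 'M[R]_(N1 + N2, K) :=
  col_mx psi1 psi2.
Definition mPsib (R : nzRingType) (N1 N2 K : nat)
  (psib1 : 'M[R]_(K, N1)) (psib2 : 'M[R]_(K, N2)) : 'M[R]_(K, N1 + N2) :=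
  row_mx psib1 psib2.

Definition iota_pb (F : numClosedFieldType) (N N' K : nat) (p : {mpoly F[nv N' K]})
  : {mpoly F[nv N K]} :=
  pullback (iotaB N' (XB F (@id _))) (iotaPsi N' (XPsi F (@id _)))
           (iotaPsib N' (XPsib F (@id _))) p.
Arguments iota_pb {F} N N' K p.

From HB Require Import structures.
From mathcomp Require Import all_boot all_algebra.
From mathcomp Require Import mpoly.
From mathcomp Require Import fingroup perm zify ring.
Set Implicit Arguments. Unset Strict Implicit. Unset Printing Implicit Defensive.
Import GRing.Theory Num.Theory.
Local Open Scope ring_scope.

(* All three statements are identities of polynomials over a field of
   characteristic zero, so it suffices to compare values at every point.
   (1) then says that padding by zeros twice is padding once.  For (3) the two
   sides evaluate at points of Rep(N1'+N2',K) conjugate under the permutation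
   matrix moving the indices N1..N1'-1 past the first N2 indices of the second
   block, and GL-invariance identifies them.  For (2), iota is a coordinate
   projection killing the coordinates outside the top-left N-block, so it
   commutes with the derivatives in the surviving coordinates.  An invariant f
   is invariant under the torus diag(1,..,1,t,..,t) (t on the indices >= N),
   so every monomial of f has as many lower as upper outer indices; hence the
   derivative of f in an outer coordinate of nonzero weight keeps an outer
   coordinate in each monomial and is killed by iota. *)

Section Coordinates.
Variables (T : Type) (N K : nat).

Lemma flat_iB (B : 'M[T]_N) (psi : 'M[T]_(N, K)) (psib : 'M[T]_(K, N)) i j :
  flat B psi psib 0 (iB K i j) = B i j.
Proof. by rewrite /flat /iB !row_mxEl mxvecE. Qed.

Lemma flat_iPsi (B : 'M[T]_N) (psi : 'M[T]_(N, K)) (psib : 'M[T]_(K, N)) i a :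
  flat B psi psib 0 (iPsi i a) = psi i a.
Proof. by rewrite /flat /iPsi row_mxEl row_mxEr mxvecE. Qed.

Lemma flat_iPsib (B : 'M[T]_N) (psi : 'M[T]_(N, K)) (psib : 'M[T]_(K, N)) b j :
  flat B psi psib 0 (iPsib b j) = psib b j.
Proof. by rewrite /flat /iPsib row_mxEr mxvecE. Qed.

Variant rep_index_spec : 'I_(nv N K) -> Type :=
  | RepIndexB (i j : 'I_N) : rep_index_spec (iB K i j)
  | RepIndexPsi (i : 'I_N) (a : 'I_K) : rep_index_spec (iPsi i a)
  | RepIndexPsib (b : 'I_K) (j : 'I_N) : rep_index_spec (iPsib b j).

Lemma rep_indexP k : rep_index_spec k.
Proof.
rewrite -[k]splitK; case: (split k) => [k1|k2] /=.
  rewrite -[k1]splitK; case: (split k1) => [k11|k12] /=.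
    by case/mxvec_indexP: k11 => i j; apply: RepIndexB.
  by case/mxvec_indexP: k12 => i a; apply: RepIndexPsi.
by case/mxvec_indexP: k2 => b j; apply: RepIndexPsib.
Qed.

Definition unflatB (v : 'I_(nv N K) -> T) : 'M[T]_N := \matrix_(i, j) v (iB K i j).
Definition unflatPsi (v : 'I_(nv N K) -> T) : 'M[T]_(N, K) := \matrix_(i, a) v (iPsi i a).
Definition unflatPsib (v : 'I_(nv N K) -> T) : 'M[T]_(K, N) := \matrix_(b, j) v (iPsib b j).

Lemma flat_unflat (v : 'I_(nv N K) -> T) :
  flat (unflatB v) (unflatPsi v) (unflatPsib v) 0 =1 v.
Proof. by move=> k; case: (rep_indexP k) => *; rewrite ?(flat_iB, flat_iPsi, flat_iPsib) mxE. Qed.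

Lemma unflatB_flat (B : 'M[T]_N) psi psib : unflatB (flat B psi psib 0) = B.
Proof. by apply/matrixP => i j; rewrite mxE flat_iB. Qed.

Lemma unflatPsi_flat (B : 'M[T]_N) psi psib : unflatPsi (flat B psi psib 0) = psi.
Proof. by apply/matrixP => i a; rewrite mxE flat_iPsi. Qed.

Lemma unflatPsib_flat (B : 'M[T]_N) psi psib : unflatPsib (flat B psi psib 0) = psib.
Proof. by apply/matrixP => b j; rewrite mxE flat_iPsib. Qed.

End Coordinates.

Lemma flat_map_mx (T U : Type) N K (f : T -> U)
    (B : 'M[T]_N) (psi : 'M[T]_(N, K)) (psib : 'M[T]_(K, N)) k :
  flat (map_mx f B) (map_mx f psi) (map_mx f psib) 0 k = f (flat B psi psib 0 k).
Proof. by case: (rep_indexP k) => *; rewrite ?(flat_iB, flat_iPsi, flat_iPsib) mxE. Qed.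

Section Padding.

(* [pad] compares indices as natural numbers, so matrices are read through
   [entry], their extension by 0 to all natural-number positions. *)
Definition insub_ord (m x : nat) : option 'I_m := @insub _ (fun k => k < m)%N 'I_m x.

Lemma insub_ord_val m (k : 'I_m) : insub_ord m k = Some k.
Proof. by rewrite /insub_ord valK. Qed.

Lemma insub_ord_eq m (k : 'I_m) x : val k = x -> insub_ord m x = Some k.
Proof. by move<-; apply: insub_ord_val. Qed.

Lemma insub_ord_out m x : (m <= x)%N -> insub_ord m x = None.
Proof. by move=> h; rewrite /insub_ord insubF // ltnNge h. Qed.

Variant insub_ord_spec m x : option 'I_m -> Type :=
  | InsubOrdSome (k : 'I_m) (_ : val k = x) : @insub_ord_spec m x (Some k)
  | InsubOrdNone (_ : (m <= x)%N) : @insub_ord_spec m x None.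

Lemma insub_ordP m x : @insub_ord_spec m x (insub_ord m x).
Proof.
case: (ltnP x m) => h; last by rewrite insub_ord_out //; constructor.
by rewrite (insub_ord_eq (k := Ordinal h)) //; constructor.
Qed.

Variable R : nzRingType.

Definition entry m n (A : 'M[R]_(m, n)) (i j : nat) : R :=
  match insub_ord m i, insub_ord n j with Some i', Some j' => A i' j' | _, _ => 0 end.

Lemma entryE m n (A : 'M[R]_(m, n)) (i : 'I_m) (j : 'I_n) : A i j = entry A i j.
Proof. by rewrite /entry !insub_ord_val. Qed.

Lemma entry_out m n (A : 'M[R]_(m, n)) i j : (m <= i)%N || (n <= j)%N -> entry A i j = 0.
Proof.
rewrite /entry; case/orP => h; first by rewrite insub_ord_out.
by rewrite (insub_ord_out h); case: insub_ord.
Qed.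

Lemma entry_pad m n m' n' (A : 'M[R]_(m, n)) i j :
  entry (pad m' n' A) i j = if (i < m')%N && (j < n')%N then entry A i j else 0.
Proof.
case: ifP => [/andP[hi hj]|/negbT]; last by rewrite negb_and -!leqNgt => /entry_out.
by rewrite {1}/entry (insub_ord_eq (k := Ordinal hi)) // (insub_ord_eq (k := Ordinal hj)) // mxE.
Qed.

Lemma entry_pad_le m n m' n' (A : 'M[R]_(m, n)) i j :
  (m <= m')%N -> (n <= n')%N -> entry (pad m' n' A) i j = entry A i j.
Proof.
move=> hm hn; rewrite entry_pad; case: ifP => // /negbT.
by rewrite negb_and -!leqNgt => h; rewrite entry_out //; lia.
Qed.

Lemma entry_row_mx m n1 n2 (A : 'M[R]_(m, n1)) (B : 'M[R]_(m, n2)) i j :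
  entry (row_mx A B) i j = if (j < n1)%N then entry A i j else entry B i (j - n1).
Proof.
rewrite /entry; case: (insub_ord m i) => [i'|]; last by case: ifP.
case: (ltnP j n1) => hj.
  rewrite (insub_ord_eq (k := lshift n2 (Ordinal hj))) //.
  by rewrite (insub_ord_eq (k := Ordinal hj)) // row_mxEl.
case: (ltnP j (n1 + n2)) => hj2; last by rewrite !insub_ord_out //; lia.
have h : (j - n1 < n2)%N by lia.
rewrite (insub_ord_eq (k := rshift n1 (Ordinal h))) /=; last by lia.
by rewrite (insub_ord_eq (k := Ordinal h)) // row_mxEr.
Qed.

Lemma entry_col_mx m1 m2 n (A : 'M[R]_(m1, n)) (B : 'M[R]_(m2, n)) i j :
  entry (col_mx A B) i j = if (i < m1)%N then entry A i j else entry B (i - m1) j.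
Proof.
rewrite /entry; case: (ltnP i m1) => hi.
  rewrite (insub_ord_eq (k := lshift m2 (Ordinal hi))) // (insub_ord_eq (k := Ordinal hi)) //.
  by case: (insub_ord n j) => // j'; rewrite col_mxEu.
case: (ltnP i (m1 + m2)) => hi2; last by rewrite !insub_ord_out //; lia.
have h : (i - m1 < m2)%N by lia.
rewrite (insub_ord_eq (k := rshift m1 (Ordinal h))) /=; last by lia.
by rewrite (insub_ord_eq (k := Ordinal h)) //; case: (insub_ord n j) => // j'; rewrite col_mxEd.
Qed.

Lemma entry_block_mx m1 m2 n1 n2 (A : 'M[R]_(m1, n1)) (B : 'M[R]_(m1, n2))
    (C : 'M[R]_(m2, n1)) (D : 'M[R]_(m2, n2)) i j :
  entry (block_mx A B C D) i j =
  if (i < m1)%N then (if (j < n1)%N then entry A i j else entry B i (j - n1))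
  else (if (j < n1)%N then entry C (i - m1) j else entry D (i - m1) (j - n1)).
Proof. by rewrite /block_mx entry_col_mx !entry_row_mx. Qed.

Lemma entryN m n (A : 'M[R]_(m, n)) i j : entry (- A) i j = - entry A i j.
Proof.
by rewrite /entry; case: (insub_ord m i) => [i'|]; case: (insub_ord n j) => [j'|];
  rewrite ?oppr0 ?mxE.
Qed.

Lemma entryM m n p (A : 'M[R]_(m, n)) (B : 'M[R]_(n, p)) i j :
  entry (A *m B) i j = \sum_(k < n) entry A i k * entry B k j.
Proof.
rewrite /entry; case: (insub_ord m i) => [i'|]; last by rewrite big1 // => k; rewrite mul0r.
case: (insub_ord p j) => [j'|]; last first.
  by rewrite big1 // => k _; case: (insub_ord n k) => [?|]; rewrite ?mulr0.
by rewrite mxE; apply: eq_bigr => k _; rewrite !insub_ord_val.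
Qed.

Lemma pad_pad m n m' n' m'' n'' (A : 'M[R]_(m, n)) :
  (m <= m')%N -> (n <= n')%N -> (m' <= m'')%N -> (n' <= n'')%N ->
  pad m'' n'' (pad m' n' A) = pad m'' n'' A.
Proof. by move=> *; apply/matrixP => i j; rewrite !entryE !entry_pad_le //; lia. Qed.

Lemma mul_pad m n p (A : 'M[R]_(m, p)) (B : 'M[R]_(p, n)) m' n' :
  (m <= m')%N -> (n <= n')%N -> pad m' p A *m pad p n' B = pad m' n' (A *m B).
Proof.
move=> hm hn; apply/matrixP => i j; rewrite !entryE entryM entry_pad_le // entryM.
by apply: eq_bigr => k _; rewrite !entry_pad_le.
Qed.

End Padding.

Lemma entry_map_mx (R S : nzRingType) (f : {additive R -> S}) m n (A : 'M[R]_(m, n)) i j :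
  entry (map_mx f A) i j = f (entry A i j).
Proof.
by rewrite /entry; case: (insub_ord m i) => [i'|]; case: (insub_ord n j) => [j'|];
  rewrite ?raddf0 ?mxE.
Qed.

Lemma map_pad (R S : nzRingType) (f : {additive R -> S}) m n m' n' (A : 'M[R]_(m, n)) :
  map_mx f (pad m' n' A) = pad m' n' (map_mx f A).
Proof.
apply/matrixP => i j; rewrite !entryE entry_map_mx !entry_pad.
by case: ifP; rewrite ?raddf0 // entry_map_mx.
Qed.

Section EvalInjective.
Variable R : numDomainType.

Definition mnm_drop_last n (m : 'X_{1..n.+1}) : 'X_{1..n} :=
  [multinom m (widen_ord (leqnSn n) i) | i < n].

Lemma mnm_eq_last n (m m' : 'X_{1..n.+1}) :
  (m' == m) = (mnm_drop_last m' == mnm_drop_last m) && (m' ord_max == m ord_max).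
Proof.
apply/eqP/andP => [->//|[/eqP e1 /eqP e2]].
apply/mnmP => j; case: (ltnP j n) => hj.
  have -> : j = widen_ord (leqnSn n) (Ordinal hj) by apply: val_inj.
  by have := congr1 (fun x : 'X_{1..n} => x (Ordinal hj)) e1; rewrite !mnmE.
by have -> : j = ord_max by apply: val_inj => /=; have := ltn_ord j; lia.
Qed.

Lemma mcoeff_muni n (p : {mpoly R[n.+1]}) m :
  p@_m = ((muni p)`_(m ord_max))@_(mnm_drop_last m).
Proof.
have mcoeff_sum m0 : p@_m0 = \sum_(m' <- msupp p) p@_m' * (m' == m0)%:R.
  rewrite [in LHS](mpolyE p) raddf_sum; apply: eq_bigr => m' _.
  by rewrite /= mcoeffZ mcoeffX.
rewrite muniE coef_sum raddf_sum mcoeff_sum; apply: eq_bigr => m' _.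
rewrite /= coefZ coefXn [in RHS]mulr_natr mcoeffMn mcoeffZ mcoeffX mnm_eq_last.
rewrite -/(mnm_drop_last m') (eq_sym (m ord_max)).
by case: (_ == _); case: (_ == _); rewrite ?mulr0 ?mulr1 ?mulr0n ?mulr1n.
Qed.

Lemma meval_muni n (p : {mpoly R[n.+1]}) v :
  p.@[v] = (map_poly (meval (fun i => v (widen_ord (leqnSn n) i))) (muni p)).[v ord_max].
Proof.
rewrite muniE raddf_sum horner_sum mevalE; apply: eq_bigr => m _.
rewrite /= -mul_polyC rmorphM /= map_polyC map_polyXn hornerCM hornerXn /= mevalZ mevalX -mulrA.
congr (_ * _); rewrite big_ord_recr /=; congr (_ * _).
by apply: eq_bigr => i _; rewrite mnmE.
Qed.

(* Induction on n through [muni]: a univariate polynomial vanishing at the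
   distinct points 0, 1, 2, ... of R is zero. *)
Lemma meval_eq0 n (p : {mpoly R[n]}) : (forall v, p.@[v] = 0) -> p = 0.
Proof.
elim: n p => [|n IH] p p0.
  have pC : p = (p@_0%MM)%:MP.
    apply/mpolyP => m; have -> : m = 0%MM by apply/mnmP => -[].
    by rewrite mcoeffC eqxx mulr1.
  by rewrite pC (_ : p@_0%MM = 0) ?mpolyC0 // -(p0 (fun _ => 0)) [in RHS]pC mevalC.
suff coef_muni0 k : (muni p)`_k = 0.
  by apply/mpolyP => m; rewrite mcoeff_muni coef_muni0 !mcoeff0.
apply: IH => v; set P := map_poly (meval v) (muni p).
have -> : ((muni p)`_k).@[v] = P`_k by rewrite coef_map.
suff -> : P = 0 by rewrite coef0.
have P0 x : P.[x] = 0.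
  pose w (j : 'I_n.+1) := if insub_ord n j is Some i then v i else x.
  rewrite -(p0 w) meval_muni /P /w /= insub_ord_out //; congr (_.[_]).
  by apply: eq_map_poly => q; apply: meval_eq => j; rewrite /= insub_ord_val.
apply: (@roots_geq_poly_eq0 _ _ [seq i%:R | i <- iota 0 (size P)]).
- by apply/allP => x _; rewrite /root P0.
- by rewrite map_inj_uniq ?iota_uniq // => a b /eqP; rewrite eqr_nat => /eqP.
- by rewrite size_map size_iota.
Qed.

Lemma mpoly_meval_inj n (p q : {mpoly R[n]}) : (forall v, p.@[v] = q.@[v]) -> p = q.
Proof.
move=> pq; apply/eqP; rewrite -subr_eq0; apply/eqP/meval_eq0 => v.
by rewrite mevalB pq subrr.
Qed.

End EvalInjective.

Lemma mderivXU (R : comNzRingType) n (i k : 'I_n) :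
  ('X_i : {mpoly R[n]})^`M(k) = (i == k)%:R.
Proof.
rewrite mderivX mnm1E; case: eqP => [->|_]; last by rewrite scale0r.
suff -> : (U_(k) - U_(k))%MM = 0%MM by rewrite mpolyX0 scale1r.
by apply/mnmP => j; rewrite mnmBE mnm0E subnn.
Qed.

Lemma mderiv_comp (R : comNzRingType) n n' (t : n'.-tuple {mpoly R[n]}) x (p : {mpoly R[n']}) :
  (p \mPo t)^`M(x) = \sum_(k < n') (p^`M(k) \mPo t) * (tnth t k)^`M(x).
Proof.
pose chain q := (q \mPo t)^`M(x) = \sum_(k < n') (q^`M(k) \mPo t) * (tnth t k)^`M(x).
have chainC c : chain c%:MP.
  rewrite /chain comp_mpolyC mderivC big1 // => k _.
  by rewrite mderivC comp_mpolyC mul0r.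
have chainD q r : chain q -> chain r -> chain (q + r).
  rewrite /chain => Hq Hr; rewrite raddfD /= mderivD Hq Hr -big_split /=.
  by apply: eq_bigr => k _; rewrite mderivD raddfD mulrDl.
have chainM q r : chain q -> chain r -> chain (q * r).
  rewrite /chain => Hq Hr; rewrite rmorphM /= mderivM Hq Hr.
  rewrite mulr_suml mulr_sumr -big_split /=; apply: eq_bigr => k _.
  by rewrite mderivM raddfD /= !rmorphM /=; ring.
have chainX i : chain 'X_i.
  rewrite /chain comp_mpolyXU -tnth_nth (bigD1 i) //= big1 ?addr0.
    by rewrite mderivXU eqxx rmorph1 mul1r.
  by move=> k ki; rewrite mderivXU eq_sym (negbTE ki) rmorph0 mul0r.
rewrite [p]mpolyE; apply: (big_ind chain) => [|//|m _]; first by rewrite -mpolyC0.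
rewrite -mul_mpolyC mpolyXE_id; apply: (chainM) => //.
apply: (big_ind chain) => [|//|i _]; first by rewrite -mpolyC1.
by elim: (m i) => [|e IH]; rewrite ?expr0 -?mpolyC1 // exprS; apply: chainM.
Qed.

Definition optX (R : nzRingType) n (o : option 'I_n) : {mpoly R[n]} :=
  if o is Some y then 'X_y else 0.

Lemma mderiv_comp_optX (R : comNzRingType) n n' (e : 'I_n' -> option 'I_n)
    (phi : 'I_n -> 'I_n') (t : n'.-tuple {mpoly R[n]}) :
  (forall x, e (phi x) = Some x) -> (forall k x, e k = Some x -> k = phi x) ->
  (forall k, tnth t k = optX R (e k)) ->
  forall (p : {mpoly R[n']}) x, (p \mPo t)^`M(x) = p^`M(phi x) \mPo t.
Proof.
move=> ephi e_inj te p x; rewrite mderiv_comp (bigD1 (phi x)) //= big1 ?addr0.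
  by rewrite te ephi /= mderivXU eqxx mulr1.
move=> k kx; rewrite te; case ek: (e k) => [y|] /=; last by rewrite mderiv0 mulr0.
rewrite mderivXU; case: eqP => [yx|_]; last by rewrite mulr0.
by move: kx; rewrite (e_inj _ _ ek) yx eqxx.
Qed.

Definition mnm_weight n (w : 'I_n -> nat) (m : 'X_{1..n}) : nat := (\sum_(j < n) m j * w j)%N.

(* If a monomial of the derivative had no outer variable left, its weights
   would be those of k, which differ. *)
Lemma mderiv_comp_unbalanced_eq0 (R : comNzRingType) n n' (t : n'.-tuple {mpoly R[n]})
    (outer : pred 'I_n') (wp wn : 'I_n' -> nat) (p : {mpoly R[n']}) k :
  (forall j, outer j -> tnth t j = 0) ->
  (forall j, ~~ outer j -> wp j = 0%N /\ wn j = 0%N) ->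
  (forall m, m \in msupp p -> mnm_weight wp m = mnm_weight wn m) ->
  outer k -> wp k != wn k -> p^`M(k) \mPo t = 0.
Proof.
move=> t0 inner0 balanced ok wk.
rewrite {1}(mpolyE p) (raddf_sum (mderiv k)) raddf_sum /= big1_seq // => m /andP[_ mp].
rewrite mderivZ mderivX linearZ linearZ /= comp_mpolyX.
case: (posnP (m k)) => [->|mk]; first by rewrite scale0r scaler0.
case: (boolP [exists j, outer j && (0 < (m - U_(k))%MM j)%N]).
  case/existsP => j /andP[oj mj].
  rewrite (bigD1 j) //= t0 // expr0n; move: mj; case: eqP => [->//|_ _].
  by rewrite mul0r !scaler0.
move/existsPn => no_outer; exfalso.
have mnm_weight_k (w : 'I_n' -> nat) : (forall j, ~~ outer j -> w j = 0%N) -> mnm_weight w m = w k.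
  move=> w0; rewrite /mnm_weight (bigD1 k) //= big1.
    have := no_outer k; rewrite ok /= mnmBE mnm1E eqxx -leqNgt => h.
    by rewrite (_ : m k = 1%N) ?mul1n ?addn0 //; lia.
  move=> j jk; case: (boolP (outer j)) => oj; last by rewrite w0 // muln0.
  have := no_outer j; rewrite oj /= mnmBE mnm1E eq_sym (negbTE jk) subn0.
  by rewrite -leqNgt leqn0 => /eqP ->.
move: wk; rewrite -(mnm_weight_k wp) -?(mnm_weight_k wn) ?balanced ?eqxx //.
  by move=> j /inner0 [].
by move=> j /inner0 [].
Qed.

Lemma mcoeff_comp_scale (R : comNzRingType) n (c : 'I_n -> R) (p : {mpoly R[n]}) m :
  (p \mPo [tuple c k *: 'X_k | k < n])@_m = p@_m * \prod_k c k ^+ m k.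
Proof.
have scaleX m' : 'X_[m'] \mPo [tuple c k *: 'X_k | k < n] = (\prod_k c k ^+ m' k) *: 'X_[m'].
  rewrite comp_mpolyX [in RHS]mpolyXE_id -scaler_prod.
  by apply: eq_bigr => k _; rewrite tnth_mktuple exprZn.
rewrite comp_mpolyEX raddf_sum /=.
have [mp|mNp] := boolP (m \in msupp p); last first.
  rewrite memN_msupp_eq0 // mul0r big1_seq // => m' /andP[_ m'p].
  have m'm : m' != m by apply: contraNneq mNp => <-.
  by rewrite scaleX !mcoeffZ mcoeffX (negbTE m'm) !mulr0.
rewrite (bigD1_seq m) ?msupp_uniq //= big1 ?addr0.
  by rewrite scaleX !mcoeffZ mcoeffX eqxx mulr1.
by move=> m' m'm; rewrite scaleX !mcoeffZ mcoeffX (negbTE m'm) !mulr0.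
Qed.

(* The substitution scales the monomial m by 2^(mnm_weight wp m - mnm_weight wn m). *)
Lemma scale_invariant_balanced (R : numFieldType) n (wp wn : 'I_n -> nat) (p : {mpoly R[n]}) :
  p \mPo [tuple (2 ^+ wp k / 2 ^+ wn k) *: 'X_k | k < n] = p ->
  forall m, m \in msupp p -> mnm_weight wp m = mnm_weight wn m.
Proof.
move=> p_inv m; rewrite mcoeff_msupp => pm.
have : \prod_k (2 ^+ wp k / 2 ^+ wn k) ^+ m k = 1 :> R.
  by apply: (mulfI pm); rewrite -mcoeff_comp_scale p_inv mulr1.
under eq_bigr do rewrite exprMn exprVn -!exprM.
rewrite prodf_div !prodrXr => /divr1_eq /eqP.
rewrite -!natrX eqr_nat => /eqP /expnI -/(_ isT).
by rewrite /mnm_weight; under [in RHS]eq_bigr do rewrite mulnC; under eq_bigr do rewrite mulnC.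
Qed.

Section Evaluation.
Variable F : numClosedFieldType.

Lemma meval_pullback n N K (B : 'M[{mpoly F[n]}]_N) psi psib (p : {mpoly F[nv N K]}) v :
  (pullback B psi psib p).@[v] =
  evalRep p (map_mx (meval v) B) (map_mx (meval v) psi) (map_mx (meval v) psib).
Proof.
rewrite /pullback comp_mpoly_meval /evalRep; apply: meval_eq => k.
by rewrite tnth_mktuple flat_map_mx.
Qed.

Lemma map_XB n N K (e : 'I_(nv N K) -> 'I_n) v :
  map_mx (meval v) (XB F e) = unflatB (v \o e).
Proof. by apply/matrixP => i j; rewrite !mxE mevalXU. Qed.

Lemma map_XPsi n N K (e : 'I_(nv N K) -> 'I_n) v :
  map_mx (meval v) (XPsi F e) = unflatPsi (v \o e).
Proof. by apply/matrixP => i a; rewrite !mxE mevalXU. Qed.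

Lemma map_XPsib n N K (e : 'I_(nv N K) -> 'I_n) v :
  map_mx (meval v) (XPsib F e) = unflatPsib (v \o e).
Proof. by apply/matrixP => b j; rewrite !mxE mevalXU. Qed.

Lemma evalRep_unflat N K (p : {mpoly F[nv N K]}) v :
  evalRep p (unflatB v) (unflatPsi v) (unflatPsib v) = p.@[v].
Proof. exact/meval_eq/flat_unflat. Qed.

Lemma meval_iota_pb N N' K (p : {mpoly F[nv N' K]}) v :
  (iota_pb N N' K p).@[v] =
  evalRep p (pad N' N' (unflatB v)) (pad N' K (unflatPsi v)) (pad K N' (unflatPsib v)).
Proof. by rewrite meval_pullback !map_pad map_XB map_XPsi map_XPsib. Qed.

Lemma iota_pb_comp K N N' N'' : (N <= N')%N -> (N' <= N'')%N ->
  forall p : {mpoly F[nv N'' K]}, iota_pb N N' K (iota_pb N' N'' K p) = iota_pb N N'' K p.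
Proof.
move=> le1 le2 p; apply: mpoly_meval_inj => v.
rewrite meval_iota_pb [RHS]meval_iota_pb {1}/evalRep meval_iota_pb.
by rewrite unflatB_flat unflatPsi_flat unflatPsib_flat !pad_pad.
Qed.

End Evaluation.

Lemma mulmx1_invmx (R : comUnitRingType) n (A B : 'M[R]_n) : A *m B = 1%:M -> invmx A = B.
Proof.
move=> AB; have [Au _] := mulmx1_unit AB.
by rewrite -[invmx A]mulmx1 -AB mulmxA mulVmx // mul1mx.
Qed.

Section Iota.
Variables (F : numClosedFieldType) (N N' K : nat).
Hypothesis le_N : (N <= N')%N.

(* [iota_index k] is the coordinate of Rep(N,K) to which iota pulls back the
   coordinate k, or None when it pulls it back to 0. *)
Definition iota_index : 'I_(nv N' K) -> option 'I_(nv N K) :=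
  flat (\matrix_(i < N', j < N') match insub_ord N i, insub_ord N j with
                                 | Some i', Some j' => Some (iB K i' j') | _, _ => None end)
       (\matrix_(i < N', a < K) if insub_ord N i is Some i' then Some (iPsi i' a) else None)
       (\matrix_(b < K, j < N') if insub_ord N j is Some j' then Some (iPsib b j') else None) 0.

Definition widen_index : 'I_(nv N K) -> 'I_(nv N' K) :=
  flat (\matrix_(i, j) iB K (widen_ord le_N i) (widen_ord le_N j))
       (\matrix_(i, a) iPsi (widen_ord le_N i) a)
       (\matrix_(b, j) iPsib b (widen_ord le_N j)) 0.

Lemma widen_index_iB i j : widen_index (iB K i j) = iB K (widen_ord le_N i) (widen_ord le_N j).
Proof. by rewrite /widen_index flat_iB mxE. Qed.

Lemma widen_index_iPsi i a : widen_index (iPsi i a) = iPsi (widen_ord le_N i) a.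
Proof. by rewrite /widen_index flat_iPsi mxE. Qed.

Lemma widen_index_iPsib b j : widen_index (iPsib b j) = iPsib b (widen_ord le_N j).
Proof. by rewrite /widen_index flat_iPsib mxE. Qed.

Lemma iota_index_widen x : iota_index (widen_index x) = Some x.
Proof.
by case: (rep_indexP x) => *; rewrite /widen_index ?(flat_iB, flat_iPsi, flat_iPsib) mxE
  /iota_index ?(flat_iB, flat_iPsi, flat_iPsib) mxE /= !insub_ord_val.
Qed.

Lemma iota_index_Some k x : iota_index k = Some x -> k = widen_index x.
Proof.
case: (rep_indexP k) => [i j|i a|b j];
  rewrite /iota_index ?(flat_iB, flat_iPsi, flat_iPsib) mxE.
- case: insub_ordP => [i' ei|//]; case: insub_ordP => [j' ej|//] [<-].
  by rewrite widen_index_iB; congr iB; apply: val_inj; rewrite /= ?ei ?ej.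
- case: insub_ordP => [i' ei|//] [<-].
  by rewrite widen_index_iPsi; congr iPsi; apply: val_inj; rewrite /= ei.
- case: insub_ordP => [j' ej|//] [<-].
  by rewrite widen_index_iPsib; congr iPsib; apply: val_inj; rewrite /= ej.
Qed.

Definition iota_tuple : (nv N' K).-tuple {mpoly F[nv N K]} :=
  mktuple (flat (iotaB N' (XB F id)) (iotaPsi N' (XPsi F id)) (iotaPsib N' (XPsib F id)) 0).

Lemma iota_pbE (p : {mpoly F[nv N' K]}) : iota_pb N N' K p = p \mPo iota_tuple.
Proof. by []. Qed.

HB.instance Definition _ := GRing.RMorphism.copy (iota_pb N N' K) (comp_mpoly iota_tuple).

Lemma tnth_iota_tuple k : tnth iota_tuple k = optX F (iota_index k).
Proof.
rewrite tnth_mktuple; case: (rep_indexP k) => [i j|i a|b j];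
  rewrite /iota_index !(flat_iB, flat_iPsi, flat_iPsib) !mxE /insub_ord ?valK /XB /XPsi /XPsib.
- by case: insub => [i'|] //; case: insub => [j'|] //=; rewrite mxE.
- by case: insub => [i'|] //=; rewrite mxE.
- by case: insub => [j'|] //=; rewrite mxE.
Qed.

Lemma mderiv_iota_pb (p : {mpoly F[nv N' K]}) x :
  (iota_pb N N' K p)^`M(x) = iota_pb N N' K (p^`M(widen_index x)).
Proof. exact: (mderiv_comp_optX iota_index_widen iota_index_Some tnth_iota_tuple). Qed.

(* The torus diag(1,..,1,t,..,t), with t on the indices >= N, scales the
   coordinate k by t^(outer_rows k - outer_cols k). *)
Definition outer_rows : 'I_(nv N' K) -> nat :=
  flat (\matrix_(i < N', j < N') ((N <= i)%N : nat)) (\matrix_(i < N', a < K) ((N <= i)%N : nat))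
       (\matrix_(b < K, j < N') 0%N) 0.

Definition outer_cols : 'I_(nv N' K) -> nat :=
  flat (\matrix_(i < N', j < N') ((N <= j)%N : nat)) (\matrix_(i < N', a < K) 0%N)
       (\matrix_(b < K, j < N') ((N <= j)%N : nat)) 0.

Lemma outer_weights_inner k : iota_index k != None -> outer_rows k = 0%N /\ outer_cols k = 0%N.
Proof.
case ek: (iota_index k) => [x|] // _; rewrite (iota_index_Some ek).
have N_gt (i : 'I_N) : (N <= i)%N = false by rewrite leqNgt ltn_ord.
by case: (rep_indexP x) => *; rewrite ?(widen_index_iB, widen_index_iPsi, widen_index_iPsib)
  /outer_rows /outer_cols !(flat_iB, flat_iPsi, flat_iPsib) !mxE /= ?N_gt.
Qed.

Lemma gl_invariant_balanced (p : {mpoly F[nv N' K]}) : gl_invariant p ->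
  forall m, m \in msupp p -> mnm_weight outer_rows m = mnm_weight outer_cols m.
Proof.
move=> p_inv; apply: scale_invariant_balanced; apply: mpoly_meval_inj => v.
pose c (i : 'I_N') : F := 2 ^+ (N <= i).
have c_neq0 i : c i != 0 by rewrite expf_neq0 // pnatr_eq0.
pose g := diag_mx (\row_i c i).
have gV : g *m diag_mx (\row_i (c i)^-1) = 1%:M.
  apply/matrixP => i j; rewrite mul_diag_mx !mxE.
  by case: eqP => [->|_]; rewrite ?mulr1n ?mulfV ?mulr0n ?mulr0.
rewrite comp_mpoly_meval -[RHS]evalRep_unflat -(p_inv g (mulmx1_unit gV).1) /evalRep.
apply: meval_eq => k; rewrite tnth_mktuple mevalZ mevalXU (mulmx1_invmx gV).
case: (rep_indexP k) => [i j|i a|b j]; rewrite /outer_rows /outer_cols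
  !(flat_iB, flat_iPsi, flat_iPsib) ?mul_diag_mx ?mul_mx_diag !mxE /c.
- by rewrite mulrAC.
- by rewrite expr0 invr1 mulr1.
- by rewrite expr0 mul1r mulrC.
Qed.

End Iota.

Lemma sum_ord_narrow (V : nmodType) n1 n2 (le_n : (n1 <= n2)%N) (G : 'I_n2 -> V) :
  (forall i : 'I_n2, (n1 <= i)%N -> G i = 0) ->
  \sum_(i < n2) G i = \sum_(i < n1) G (widen_ord le_n i).
Proof.
move=> G0; rewrite (bigID (fun i : 'I_n2 => (i < n1)%N)) /= [X in _ + X]big1 ?addr0.
  exact: big_ord_narrow.
by move=> i; rewrite -leqNgt; exact: G0.
Qed.

Lemma sum4_ord_narrow (V : nmodType) n1 n2 (le_n : (n1 <= n2)%N)
    (S : 'I_n2 -> 'I_n2 -> 'I_n2 -> 'I_n2 -> V) :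
  (forall m n p q : 'I_n2,
     ~~ [&& (m < n1)%N, (n < n1)%N, (p < n1)%N & (q < n1)%N] -> S m n p q = 0) ->
  \sum_(m < n2) \sum_(n < n2) \sum_(p < n2) \sum_(q < n2) S m n p q =
  \sum_(m < n1) \sum_(n < n1) \sum_(p < n1) \sum_(q < n1)
     S (widen_ord le_n m) (widen_ord le_n n) (widen_ord le_n p) (widen_ord le_n q).
Proof.
move=> S0; rewrite (sum_ord_narrow le_n) => [|m hm]; last first.
  rewrite big1 // => n _; rewrite big1 // => p _; rewrite big1 // => q _.
  by apply: S0; apply/negP => /and4P[]; lia.
apply: eq_bigr => m _; rewrite (sum_ord_narrow le_n) => [|n hn]; last first.
  rewrite big1 // => p _; rewrite big1 // => q _.
  by apply: S0; apply/negP => /and4P[]; lia.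
apply: eq_bigr => n _; rewrite (sum_ord_narrow le_n) => [|p hp]; last first.
  rewrite big1 // => q _.
  by apply: S0; apply/negP => /and4P[]; lia.
apply: eq_bigr => p _; rewrite (sum_ord_narrow le_n) // => q hq.
by apply: S0; apply/negP => /and4P[]; lia.
Qed.

Section Bracket.
Variables (F : numClosedFieldType) (N K : nat).
Implicit Types f g : {mpoly F[nv N K]}.

Definition bracket_psi_term f g (i : 'I_N) (a : 'I_K) :=
  f^`M(iPsi i a) * g^`M(iPsib a i) - f^`M(iPsib a i) * g^`M(iPsi i a).

Definition bracket_B_term f g (m n p q : 'I_N) :=
  f^`M(iB K m n) * g^`M(iB K p q) *
  ((n == p)%:R * \sum_(a < K) 'X_(iPsib a q) * 'X_(iPsi m a)
   - (m == q)%:R * \sum_(a < K) 'X_(iPsib a n) * 'X_(iPsi p a)).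

Lemma pbracketE f g :
  pbracket f g = \sum_(i < N) \sum_(a < K) bracket_psi_term f g i a
               + \sum_(m < N) \sum_(n < N) \sum_(p < N) \sum_(q < N) bracket_B_term f g m n p q.
Proof.
congr (_ + _); do 4!(apply: eq_bigr => ? _).
by congr (_ * (_ * _ - _ * _)); apply: eq_bigr => a _; rewrite !mxE.
Qed.

End Bracket.

Section IotaPoisson.
Variables (F : numClosedFieldType) (N N' K : nat).
Hypothesis le_N : (N <= N')%N.
Implicit Types f g : {mpoly F[nv N' K]}.

Local Notation iota := (iota_pb N N' K).
Local Notation w := (widen_ord le_N).
Local Notation iota_index := (@iota_index N N' K).
Local Notation outer_rows := (@outer_rows N N' K).
Local Notation outer_cols := (@outer_cols N N' K).

Lemma iota_pbX k : iota 'X_k = optX F (iota_index k).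
Proof. by rewrite iota_pbE comp_mpolyXU -tnth_nth tnth_iota_tuple. Qed.

Lemma iota_index_iPsi i a : iota_index (iPsi (w i) a) = Some (iPsi i a).
Proof. by rewrite -widen_index_iPsi iota_index_widen. Qed.

Lemma iota_index_iPsib b j : iota_index (iPsib b (w j)) = Some (iPsib b j).
Proof. by rewrite -widen_index_iPsib iota_index_widen. Qed.

Lemma iota_index_iB_out (i j : 'I_N') : (N <= i)%N || (N <= j)%N -> iota_index (iB K i j) = None.
Proof.
rewrite /iota_index flat_iB mxE; case/orP => h; first by rewrite insub_ord_out.
by rewrite (insub_ord_out h); case: insub_ord.
Qed.

Lemma iota_index_iPsi_out (i : 'I_N') a : (N <= i)%N -> iota_index (iPsi i a) = None.
Proof. by move=> h; rewrite /iota_index flat_iPsi mxE insub_ord_out. Qed.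

Lemma iota_index_iPsib_out b (j : 'I_N') : (N <= j)%N -> iota_index (iPsib b j) = None.
Proof. by move=> h; rewrite /iota_index flat_iPsib mxE insub_ord_out. Qed.

Lemma outer_weights_iB i j :
  outer_rows (iB K i j) = (N <= i)%N /\ outer_cols (iB K i j) = (N <= j)%N.
Proof. by rewrite /outer_rows /outer_cols !flat_iB !mxE. Qed.

Lemma outer_weights_iPsi i a :
  outer_rows (iPsi i a) = (N <= i)%N /\ outer_cols (iPsi i a) = 0%N.
Proof. by rewrite /outer_rows /outer_cols !flat_iPsi !mxE. Qed.

Lemma outer_weights_iPsib b j :
  outer_rows (iPsib b j) = 0%N /\ outer_cols (iPsib b j) = (N <= j)%N.
Proof. by rewrite /outer_rows /outer_cols !flat_iPsib !mxE. Qed.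

Lemma iota_pb_mderiv_outer f k : gl_invariant f ->
  iota_index k = None -> outer_rows k != outer_cols k -> iota (f^`M(k)) = 0.
Proof.
move=> f_inv k_out k_wt; rewrite iota_pbE.
apply: (@mderiv_comp_unbalanced_eq0 _ _ _ _ [pred j | iota_index j == None]) k_wt.
- by move=> j /eqP j_out; rewrite tnth_iota_tuple j_out.
- exact: outer_weights_inner.
- exact: gl_invariant_balanced.
- by rewrite /= k_out.
Qed.

Lemma iota_pb_psi_term f g i a :
  iota (bracket_psi_term f g (w i) a) = bracket_psi_term (iota f) (iota g) i a.
Proof.
by rewrite /bracket_psi_term !(rmorphB, rmorphM) /= !mderiv_iota_pb
  widen_index_iPsi widen_index_iPsib.
Qed.

Lemma iota_pb_psi_term_outer f g (i : 'I_N') a : gl_invariant f -> (N <= i)%N ->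
  iota (bracket_psi_term f g i a) = 0.
Proof.
move=> f_inv hi; rewrite /bracket_psi_term !(rmorphB, rmorphM) /=.
rewrite (iota_pb_mderiv_outer f_inv (iota_index_iPsi_out a hi)); last first.
  by case: (outer_weights_iPsi i a) => -> ->; rewrite hi.
rewrite (iota_pb_mderiv_outer f_inv (iota_index_iPsib_out a hi)); last first.
  by case: (outer_weights_iPsib a i) => -> ->; rewrite hi.
by rewrite !mul0r subrr.
Qed.

Lemma iota_pb_sumXX (u v : 'I_K -> 'I_(nv N' K)) :
  iota (\sum_(a < K) 'X_(u a) * 'X_(v a))
  = \sum_(a < K) optX F (iota_index (u a)) * optX F (iota_index (v a)).
Proof. by rewrite rmorph_sum; apply: eq_bigr => a _; rewrite rmorphM /= !iota_pbX. Qed.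

Lemma iota_pb_B_term f g m n p q :
  iota (bracket_B_term f g (w m) (w n) (w p) (w q)) = bracket_B_term (iota f) (iota g) m n p q.
Proof.
rewrite /bracket_B_term !(rmorphB, rmorphM) !rmorph_nat /=.
rewrite !mderiv_iota_pb !widen_index_iB !iota_pb_sumXX.
congr (_ * _ * (_ * _ - _ * _)); apply: eq_bigr => a _.
  by rewrite iota_index_iPsib iota_index_iPsi.
by rewrite iota_index_iPsib iota_index_iPsi.
Qed.

(* Each half of the term survives iota only if its psi-factors are inner; then
   n = p (resp. m = q) is outer, so B_mn is an outer coordinate with exactly
   one outer index. *)
Lemma iota_pb_B_term_outer f g (m n p q : 'I_N') : gl_invariant f ->
  ~~ [&& (m < N)%N, (n < N)%N, (p < N)%N & (q < N)%N] ->
  iota (bracket_B_term f g m n p q) = 0.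
Proof.
move=> f_inv outer.
have fB_eq0 : (N <= m)%N != (N <= n)%N -> iota f^`M(iB K m n) = 0.
  move=> mn_wt; apply: iota_pb_mderiv_outer => //.
    by apply: iota_index_iB_out; move: mn_wt; case: (N <= m)%N; case: (N <= n)%N.
  by case: (outer_weights_iB m n) => -> ->; case: (N <= m)%N (N <= n)%N mn_wt => -[].
rewrite /bracket_B_term !(rmorphB, rmorphM) !rmorph_nat /=.
rewrite !iota_pb_sumXX mulrBr.
have psi0 (i : 'I_N') a : (N <= i)%N -> optX F (iota_index (iPsi i a)) = 0.
  by move=> hi; rewrite iota_index_iPsi_out.
have psib0 (j : 'I_N') b : (N <= j)%N -> optX F (iota_index (iPsib b j)) = 0.
  by move=> hj; rewrite iota_index_iPsib_out.
rewrite [X in X - _](_ : _ = 0) ?[X in _ - X](_ : _ = 0) ?subrr //.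
- case: (leqP N n) => hn; first by rewrite big1 ?mulr0 // => a _; rewrite psib0 ?mul0r.
  case: (leqP N p) => hp; first by rewrite big1 ?mulr0 // => a _; rewrite psi0 ?mulr0.
  case: eqP => [emq|]; last by rewrite mul0r mulr0.
  by rewrite fB_eq0 ?mul0r //; move: outer; rewrite -emq; case: leqP; lia.
- case: (leqP N m) => hm; first by rewrite big1 ?mulr0 // => a _; rewrite psi0 ?mulr0.
  case: (leqP N q) => hq; first by rewrite big1 ?mulr0 // => a _; rewrite psib0 ?mul0r.
  case: eqP => [enp|]; last by rewrite mul0r mulr0.
  by rewrite fB_eq0 ?mul0r //; move: outer; rewrite -enp; case: leqP; lia.
Qed.

Lemma iota_pb_pbracket f g : gl_invariant f ->
  iota (pbracket f g) = pbracket (iota f) (iota g).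
Proof.
move=> f_inv; rewrite !pbracketE rmorphD !rmorph_sum /=; congr (_ + _).
  rewrite (sum_ord_narrow le_N) => [|i hi]; last first.
    by rewrite rmorph_sum /= big1 // => a _; rewrite iota_pb_psi_term_outer.
  by apply: eq_bigr => i _; rewrite rmorph_sum /=; apply: eq_bigr => a _; rewrite iota_pb_psi_term.
under eq_bigr => m _ do (rewrite rmorph_sum /=; under eq_bigr => n _ do
  (rewrite rmorph_sum /=; under eq_bigr => p _ do rewrite rmorph_sum /=)).
rewrite (sum4_ord_narrow le_N) => [|m n p q mnpq]; last exact: iota_pb_B_term_outer.
by do 4!(apply: eq_bigr => ? _); rewrite iota_pb_B_term.
Qed.

End IotaPoisson.

Lemma invmx_perm_mx (R : comUnitRingType) n (s : 'S_n) :
  invmx (perm_mx s : 'M[R]_n) = perm_mx s^-1.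
Proof. by apply: mulmx1_invmx; rewrite -perm_mxM mulgV perm_mx1. Qed.

Lemma map_mB (R S : nzRingType) (f : {rmorphism R -> S}) N1 N2 K
    (B1 : 'M[R]_N1) (psi1 : 'M[R]_(N1, K)) (psib1 : 'M[R]_(K, N1))
    (B2 : 'M[R]_N2) (psi2 : 'M[R]_(N2, K)) (psib2 : 'M[R]_(K, N2)) :
  map_mx f (mB B1 psi1 psib1 B2 psi2 psib2) =
  mB (map_mx f B1) (map_mx f psi1) (map_mx f psib1) (map_mx f B2) (map_mx f psi2) (map_mx f psib2).
Proof. by rewrite /mB map_block_mx map_mxN !map_mxM. Qed.

Section PadProduct.
Variables (F : numClosedFieldType) (K N1 N2 N1' N2' : nat).
Hypotheses (le_N1 : (N1 <= N1')%N) (le_N2 : (N2 <= N2')%N).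

(* Moves the padding rows N1..N1'-1 of the first factor behind the N2 live
   rows of the second one. *)
Definition pad_shuffle (i : nat) : nat :=
  if (i < N1)%N then i else if (i < N1')%N then (i + N2)%N
  else if (i < N1' + N2)%N then (i - (N1' - N1))%N else i.

Lemma pad_shuffle_cases i :
  [\/ (i < N1)%N /\ pad_shuffle i = i,
      (N1 <= i < N1')%N /\ pad_shuffle i = (i + N2)%N,
      (N1' <= i < N1' + N2)%N /\ pad_shuffle i = (i - (N1' - N1))%N
    | (N1' + N2 <= i)%N /\ pad_shuffle i = i].
Proof.
rewrite /pad_shuffle; case: ifP => h1; first by constructor 1.
case: ifP => h2; first by constructor 2; split => //; lia.
case: ifP => h3; first by constructor 3; split => //; lia.
by constructor 4; split => //; lia.
Qed.

Lemma pad_shuffle_lt (i : 'I_(N1' + N2')) : (pad_shuffle i < N1' + N2')%N.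
Proof. by have := ltn_ord i; case: (pad_shuffle_cases i) => -[? ->]; lia. Qed.

Lemma pad_shuffle_inj : injective (fun i => Ordinal (pad_shuffle_lt i)).
Proof.
move=> i j /(congr1 val) /= e; apply: val_inj => /=.
by case: (pad_shuffle_cases i) => -[? Ei]; case: (pad_shuffle_cases j) => -[? Ej];
  rewrite Ei Ej in e; lia.
Qed.

Definition pad_shuffle_perm : 'S_(N1' + N2') := perm pad_shuffle_inj.

Lemma pad_shuffle_permE i : val (pad_shuffle_perm i) = pad_shuffle i.
Proof. by rewrite permE. Qed.

Ltac entry_cases :=
  repeat (case: ifP => ?); try (exfalso; lia);
  repeat match goal with
         | |- context [entry ?A ?i ?j] => rewrite (@entry_out _ _ _ A i j); [|lia]
         end;
  rewrite ?oppr0 //; try (congr (entry _ _ _); lia); try (congr (- entry _ _ _); lia).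

Lemma evalRep_mB_pad (p : {mpoly F[nv (N1' + N2') K]}) : gl_invariant p ->
  forall (B1 : 'M[F]_N1) (psi1 : 'M[F]_(N1, K)) (psib1 : 'M[F]_(K, N1))
         (B2 : 'M[F]_N2) (psi2 : 'M[F]_(N2, K)) (psib2 : 'M[F]_(K, N2)),
  evalRep p (mB (pad N1' N1' B1) (pad N1' K psi1) (pad K N1' psib1)
                (pad N2' N2' B2) (pad N2' K psi2) (pad K N2' psib2))
            (mPsi (pad N1' K psi1) (pad N2' K psi2))
            (mPsib (pad K N1' psib1) (pad K N2' psib2))
  = evalRep p (pad (N1' + N2') (N1' + N2') (mB B1 psi1 psib1 B2 psi2 psib2))
              (pad (N1' + N2') K (mPsi psi1 psi2))
              (pad K (N1' + N2') (mPsib psib1 psib2)).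
Proof.
move=> p_inv B1 psi1 psib1 B2 psi2 psib2.
set s := pad_shuffle_perm.
rewrite -[RHS](p_inv (perm_mx s) (unitmx_perm F s)) invmx_perm_mx.
rewrite -row_permE -col_permE -row_permE -col_permE.
congr evalRep; apply/matrixP => i j.
- rewrite [RHS]mxE [RHS]mxE !entryE !pad_shuffle_permE /mB !mul_pad // entry_pad_le; try lia.
  rewrite !entry_block_mx !entryN !entry_pad_le //.
  have := ltn_ord i; have := ltn_ord j.
  by case: (pad_shuffle_cases i) => -[? ->]; case: (pad_shuffle_cases j) => -[? ->] ? ?;
    entry_cases.
- rewrite [RHS]mxE !entryE !pad_shuffle_permE /mPsi entry_pad_le; try lia.
  rewrite !entry_col_mx !entry_pad_le //.
  by have := ltn_ord i; case: (pad_shuffle_cases i) => -[? ->] ?; entry_cases.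
- rewrite [RHS]mxE !entryE !pad_shuffle_permE /mPsib entry_pad_le; try lia.
  rewrite !entry_row_mx !entry_pad_le //.
  by have := ltn_ord j; case: (pad_shuffle_cases j) => -[? ->] ?; entry_cases.
Qed.

End PadProduct.

Theorem mainTheorem11 (F : numClosedFieldType) (K : nat) :
  (* (1) iota_{N',N''} o iota_{N,N'} = iota_{N,N''} on M(N,K) *)
  (forall (N N' N'' : nat), (N < N')%N -> (N' < N'')%N ->
     forall p : {mpoly F[nv N'' K]}, gl_invariant p ->
       iota_pb N N' K (iota_pb N' N'' K p) = iota_pb N N'' K p)
  /\
  (* (2) iota_{N,N'} is Poisson *)
  (forall (N N' : nat), (N < N')%N ->
     forall f g : {mpoly F[nv N' K]}, gl_invariant f -> gl_invariant g ->
       iota_pb N N' K (pbracket f g) = pbracket (iota_pb N N' K f) (iota_pb N N' K g))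
  /\
  (* (3) m_{N1',N2'} o (iota_{N1,N1'} x iota_{N2,N2'})
         = iota_{N1+N2,N1'+N2'} o m_{N1,N2}  on M(N1,K) x M(N2,K) *)
  (forall (N1 N2 N1' N2' : nat), (N1 <= N1')%N -> (N2 <= N2')%N ->
     forall p : {mpoly F[nv (N1' + N2') K]}, gl_invariant p ->
       let e1 := @lshift (nv N1 K) (nv N2 K) in
       let e2 := @rshift (nv N1 K) (nv N2 K) in
       let B1 := XB F e1 in let psi1 := XPsi F e1 in let psib1 := XPsib F e1 in
       let B2 := XB F e2 in let psi2 := XPsi F e2 in let psib2 := XPsib F e2 in
       pullback
         (mB (iotaB N1' B1) (iotaPsi N1' psi1) (iotaPsib N1' psib1)
             (iotaB N2' B2) (iotaPsi N2' psi2) (iotaPsib N2' psib2))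
         (mPsi (iotaPsi N1' psi1) (iotaPsi N2' psi2))
         (mPsib (iotaPsib N1' psib1) (iotaPsib N2' psib2)) p
       =
       pullback
         (iotaB (N1' + N2') (mB B1 psi1 psib1 B2 psi2 psib2))
         (iotaPsi (N1' + N2') (mPsi psi1 psi2))
         (iotaPsib (N1' + N2') (mPsib psib1 psib2)) p).
Proof.
split; [|split].
- by move=> N N' N'' /ltnW le1 /ltnW le2 p _; apply: iota_pb_comp.
- by move=> N N' /ltnW le_N f g f_inv _; apply: iota_pb_pbracket.
move=> N1 N2 N1' N2' le1 le2 p p_inv e1 e2 B1 psi1 psib1 B2 psi2 psib2.
apply: mpoly_meval_inj => v; rewrite !meval_pullback.
rewrite /iotaB /iotaPsi /iotaPsib /mPsi /mPsib !map_mB !map_col_mx !map_row_mx !map_pad.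
rewrite map_mB !map_col_mx !map_row_mx /B1 /psi1 /psib1 /B2 /psi2 /psib2.
by rewrite !map_XB !map_XPsi !map_XPsib; apply: evalRep_mB_pad.
Qed.
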